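(* Let $k$ be a commutative ring, $H$ a cocommutative Hopf algebra over $k$, $A$ a cleft right $H$-comodule algebra with commutative $B=A^{\mathrm{co}H}$, and regard $B$ as a left $H$-module algebra via $h\cdot b=t(h_{(1)})bu(h_{(2)})$. Then the following data define a subcategory $\mathcal{X}_A$ of $\mathcal{C}_A$ with the two objects $\mathbf{1},\mathbf{2}$: $\mathcal{X}_A(\mathbf{1},\mathbf{1})=Z^1(H,B)$; $\mathcal{X}_A(\mathbf{2},\mathbf{1})=\Omega_A$; $\mathcal{X}_A(\mathbf{2},\mathbf{2})=\{\omega\in\mathrm{Hom}(H,B):\omega\circ S\in Z^1(H,B)\}$; $\mathcal{X}_A(\mathbf{1},\mathbf{2})=\{t\circ S:t\in\Omega_A\}$.
   Context: $\Delta(h)=h_{(1)}\otimes h_{(2)}$, antipode $S$, $\rho(a)=a_{[0]}\otimes a_{[1]}$, $B=\{a:\rho(a)=a\otimes1\}$. $A$ is cleft: there is a convolution invertible $H$-colinear $t:H\to A$ (colinear: $\rho(t(h))=t(h_{(1)})\otimes h_{(2)}$), with convolution inverse $u$; convolution: $(f*g)(h)=f(h_{(1)})g(h_{(2)})$. The module algebra structure above is independent of $t$. $Z^1(H,B)$ is the set of convolution invertible $k$-linear $v:H\to B$ with $v(hk)=(h_{(1)}\cdot v(k))v(h_{(2)})$ for all $h,k$. $\Omega_A$ is the set of $H$-colinear algebra maps $H\to A$. $\mathcal{C}_A$: two objects $\mathbf{1},\mathbf{2}$; $\mathcal{C}_A(\mathbf{i},\mathbf{j})$ denotes morphisms $\mathbf{i}\to\mathbf{j}$,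 sets of $k$-linear maps $H\to A$: $\mathcal{C}_A(\mathbf{1},\mathbf{1})=\{v:\rho(v(h))=v(h)\otimes1\}=\mathrm{Hom}(H,B)$; $\mathcal{C}_A(\mathbf{2},\mathbf{1})=\{t:\rho(t(h))=t(h_{(1)})\otimes h_{(2)}\}$; $\mathcal{C}_A(\mathbf{1},\mathbf{2})=\{u:\rho(u(h))=u(h_{(2)})\otimes S(h_{(1)})\}$; $\mathcal{C}_A(\mathbf{2},\mathbf{2})=\{w:\rho(w(h))=w(h_{(2)})\otimes S(h_{(1)})h_{(3)}\}$ (which equals $\mathrm{Hom}(H,B)$ here since $H$ is cocommutative). Composite of $f:\mathbf{i}\to\mathbf{j}$ and $g:\mathbf{j}\to\mathbf{k}$ is $g*f$. *)

From HB Require Import structures.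
From mathcomp Require Import all_boot all_algebra.
Set Implicit Arguments. Unset Strict Implicit. Unset Printing Implicit Defensive.
Import GRing.Theory.
Local Open Scope ring_scope.

Section Multilinear.
Variable k : comPzRingType.

Definition klinear (M P : lmodType k) (f : M -> P) : Prop :=
  forall (a : k) (x y : M), f (a *: x + y) = a *: f x + f y.

Definition kbilinear (M N P : lmodType k) (f : M -> N -> P) : Prop :=
  (forall m, klinear (f m)) /\ (forall n, klinear (fun m => f m n)).

Definition ktrilinear (M N L P : lmodType k) (f : M -> N -> L -> P) : Prop :=
  (forall m n, klinear (f m n)) /\ (forall m l, klinear (fun n => f m n l))
  /\ (forall n l, klinear (fun m => f m n l)).
End Multilinear.

(* A tensor product M (x)_k N, specified by its universal property:
   a k-module with a bilinear map tp_mul, through which every bilinear map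
   factors (tp_lift) uniquely as a linear map. *)
Record tensor_product (k : comPzRingType) (M N : lmodType k) := TensorProduct {
  tp_carrier :> lmodType k;
  tp_mul : M -> N -> tp_carrier;
  tp_lift : forall P : lmodType k, (M -> N -> P) -> tp_carrier -> P;
  tp_mul_bilinear : kbilinear tp_mul;
  tp_lift_linear : forall (P : lmodType k) (f : M -> N -> P),
      kbilinear f -> klinear (tp_lift f);
  tp_lift_mul : forall (P : lmodType k) (f : M -> N -> P),
      kbilinear f -> forall m n, tp_lift f (tp_mul m n) = f m n;
  tp_ext : forall (P : lmodType k) (g1 g2 : tp_carrier -> P),
      klinear g1 -> klinear g2 ->
      (forall m n, g1 (tp_mul m n) = g2 (tp_mul m n)) -> forall x, g1 x = g2 x
}.
Arguments tp_mul {k M N} t _ _.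
Arguments tp_lift {k M N} t {P} _ _.

Section Hopf.
Variables (k : comPzRingType) (H A : algType k).
Variables (HH : tensor_product H H) (AH : tensor_product A H).
Variables (Delta : H -> HH) (eps : H -> k) (S : H -> H) (rho : A -> AH).

(* Sweedler notation: sw f h = f(h_(1), h_(2)) for bilinear f *)
Definition sw (P : lmodType k) (f : H -> H -> P) (h : H) : P :=
  tp_lift HH f (Delta h).
(* swA f a = f(a_[0], a_[1]) *)
Definition swA (P : lmodType k) (f : A -> H -> P) (a : A) : P :=
  tp_lift AH f (rho a).

(* cocommutative Hopf algebra (H, Delta, eps, S) over k.
   Coassociativity is stated by evaluating both sides against an arbitrary
   trilinear map, i.e. via the universal property of H (x) H (x) H. *)
Definition is_cocomm_hopf : Prop :=
  klinear Delta /\ klinear (eps : H -> k^o) /\ klinear S /\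
   (forall (P : lmodType k) (f : H -> H -> H -> P), ktrilinear f ->
     forall h, sw (fun x z => sw (fun a b => f a b z) x) h
             = sw (fun x y => sw (fun a b => f x a b) y) h) /\
   (forall h, sw (fun x y => eps x *: y) h = h /\ sw (fun x y => eps y *: x) h = h) /\
   (forall h g, Delta (h * g) =
      sw (fun x y => sw (fun a b => tp_mul HH (x * a) (y * b)) g) h) /\
   Delta 1 = tp_mul HH 1 1 /\
   (forall h g, eps (h * g) = eps h * eps g) /\ eps 1 = 1 /\
   (forall h, sw (fun x y => S x * y) h = eps h *: 1
            /\ sw (fun x y => x * S y) h = eps h *: 1) /\
   (forall h, Delta h = sw (fun x y => tp_mul HH y x) h).

Definition is_comodule_algebra : Prop :=
  [/\ klinear rho,
   (forall (P : lmodType k) (f : A -> H -> H -> P), ktrilinear f ->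
     forall a, swA (fun a' z => swA (fun b x => f b x z) a') a
             = swA (fun b x => sw (fun y z => f b y z) x) a),
   (forall a, swA (fun b x => eps x *: b) a = a),
   (forall a c, rho (a * c) =
      swA (fun a1 x => swA (fun c1 y => tp_mul AH (a1 * c1) (x * y)) c) a) &
   rho 1 = tp_mul AH 1 1].

Definition coinv (a : A) : Prop := rho a = tp_mul AH a 1.

Definition conv (f g : H -> A) (h : H) : A := sw (fun x y => f x * g y) h.
Definition cunit (h : H) : A := eps h *: 1.

Definition colinear (f : H -> A) : Prop :=
  forall h, rho (f h) = sw (fun x y => tp_mul AH (f x) y) h.

Definition homB (f : H -> A) : Prop := klinear f /\ forall h, coinv (f h).

Inductive obj := O1 | O2.

Definition Cmor (i j : obj) (f : H -> A) : Prop :=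
  klinear f /\
  match i, j with
  | O1, O1 => forall h, rho (f h) = tp_mul AH (f h) 1
  | O2, O1 => colinear f
  | O1, O2 => forall h, rho (f h) = sw (fun x y => tp_mul AH (f y) (S x)) h
  | O2, O2 => forall h, rho (f h) =
       sw (fun x y => sw (fun a b => tp_mul AH (f b) (S a * y)) x) h
  end.

(* identity morphism (the convolution unit) and composition g o f := g * f *)
Definition Cid (i : obj) : H -> A := cunit.
Definition Ccomp (f g : H -> A) : H -> A := conv g f.

Definition act (t u : H -> A) (h : H) (b : A) : A :=
  sw (fun x y => t x * b * u y) h.

Definition Z1 (t u : H -> A) (v : H -> A) : Prop :=
  homB v /\
  (exists w, homB w /\ (forall h, conv v w h = cunit h)
                    /\ (forall h, conv w v h = cunit h)) /\
  (forall h g, v (h * g) = sw (fun x y => act t u x (v g) * v y) h).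

Definition OmegaA (f : H -> A) : Prop :=
  [/\ klinear f, colinear f, (forall h g, f (h * g) = f h * f g) & f 1 = 1].

Definition Xmor (t u : H -> A) (i j : obj) (f : H -> A) : Prop :=
  match i, j with
  | O1, O1 => Z1 t u f
  | O2, O1 => OmegaA f
  | O2, O2 => homB f /\ Z1 t u (fun h => f (S h))
  | O1, O2 => exists t', OmegaA t' /\ forall h, f h = t' (S h)
  end.

Definition is_subcategory (X : obj -> obj -> (H -> A) -> Prop) : Prop :=
  [/\ (forall i j f, X i j f -> Cmor i j f),
      (forall i, X i i (Cid i)) &
      (forall i j l f g, X i j f -> X j l g -> X i l (Ccomp f g))].
End Hopf.

(* In the convolution algebra Hom(H, A), a colinear algebra map g is invertible
   with inverse g o S, the action is h . b = g(h1) b g(S h2) for any such g (in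
   particular for t), and v : H -> B is a 1-cocycle iff v o m = (h . v)(v (x) eps)
   in the convolution algebra Hom(H (x) H, A). As H is cocommutative and B
   commutative, B-valued maps commute in both algebras, and each composite of
   morphisms of X_A is recognised by rearranging such products. For instance,
   for v in Z^1 and g in Omega_A,
     (v * g) o m = (h . v)(v (x) eps)(g (x) eps)(eps (x) g)
                 = (v (x) eps)(h . v)(g (x) eps)(eps (x) g),
   and substituting h . v = (g (x) eps)(eps (x) v)(g S (x) eps) this collapses to
   (v * g (x) eps)(eps (x) v * g), so v * g is again in Omega_A. *)

From HB Require Import structures.
From mathcomp Require Import all_boot all_algebra.
From Stdlib Require Import FunctionalExtensionality.
Set Implicit Arguments. Unset Strict Implicit. Unset Printing Implicit Defensive.
Import GRing.Theory.
Local Open Scope ring_scope.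

Lemma funext2 (X Y Z : Type) (f g : X -> Y -> Z) :
  (forall x y, f x y = g x y) -> f = g.
Proof. by move=> e; do 2 apply: functional_extensionality => ?; rewrite e. Qed.

(** * Linear maps and tensor products *)

Section Linearity.
Variable k : comPzRingType.
Implicit Types M N P Q : lmodType k.

Lemma klinear_id M : klinear (fun x : M => x).
Proof. by []. Qed.

Lemma klinear_comp M N P (L : N -> P) (F : M -> N) :
  klinear L -> klinear F -> klinear (fun x => L (F x)).
Proof. by move=> hL hF a x y; rewrite hF hL. Qed.

Lemma klinear_mulr (R : algType k) M (F : M -> R) c :
  klinear F -> klinear (fun x => F x * c).
Proof. by move=> hF a x y; rewrite hF mulrDl scalerAl. Qed.

Lemma klinear_mull (R : algType k) M (F : M -> R) c :
  klinear F -> klinear (fun x => c * F x).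
Proof. by move=> hF a x y; rewrite hF mulrDr scalerAr. Qed.

Lemma klinear_scaler M P (F : M -> P) (c : k) :
  klinear F -> klinear (fun x => c *: F x).
Proof. by move=> hF a x y; rewrite hF scalerDr !scalerA mulrC. Qed.

Lemma klinear_scalel M P (e : M -> k^o) (p : P) :
  klinear e -> klinear (fun x => e x *: p).
Proof. by move=> he a x y; rewrite he scalerDl /= -scalerA. Qed.

Lemma klinear_add M P (F G : M -> P) :
  klinear F -> klinear G -> klinear (fun x => F x + G x).
Proof.
move=> hF hG a x y; rewrite hF hG scalerDr -!addrA; congr (_ + _).
by rewrite addrCA.
Qed.

Lemma klinear_bilinl M N P Q (f : M -> N -> P) (F : Q -> M) n :
  kbilinear f -> klinear F -> klinear (fun x => f (F x) n).
Proof. by case=> _ h2 hF; apply: (klinear_comp (L := fun m => f m n)). Qed.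

Lemma klinear_bilinr M N P Q (f : M -> N -> P) (F : Q -> N) m :
  kbilinear f -> klinear F -> klinear (fun x => f m (F x)).
Proof. by case=> h1 _ hF; apply: (klinear_comp (L := f m)). Qed.

Lemma klinear0 M P (f : M -> P) : klinear f -> f 0 = 0.
Proof.
move=> hf; have := hf 1 0 0; rewrite !scale1r addr0 => /(congr1 (fun z => z - f 0)).
by rewrite addrK subrr => <-.
Qed.

Lemma klinearZ M P (f : M -> P) a x : klinear f -> f (a *: x) = a *: f x.
Proof. by move=> hf; have := hf a x 0; rewrite addr0 (klinear0 hf) addr0. Qed.

Section TensorLift.
Variables (M N : lmodType k) (T : tensor_product M N).

Lemma klinear_tp_mull Q (F : Q -> M) n :
  klinear F -> klinear (fun x => tp_mul T (F x) n).
Proof. exact: (klinear_bilinl _ (tp_mul_bilinear T)). Qed.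

Lemma klinear_tp_mulr Q (F : Q -> N) m :
  klinear F -> klinear (fun x => tp_mul T m (F x)).
Proof. exact: (klinear_bilinr _ (tp_mul_bilinear T)). Qed.

Lemma klinear_tp_lift P Q (f : M -> N -> P) (F : Q -> T) :
  kbilinear f -> klinear F -> klinear (fun x => tp_lift T f (F x)).
Proof. by move=> hf; apply: klinear_comp; exact: tp_lift_linear. Qed.

Lemma tp_liftD P (f g : M -> N -> P) c z :
  kbilinear f -> kbilinear g ->
  tp_lift T (fun a b => c *: f a b + g a b) z = c *: tp_lift T f z + tp_lift T g z.
Proof.
move=> hf hg.
have hfg : kbilinear (fun a b => c *: f a b + g a b).
  case: hf hg => hf1 hf2 [hg1 hg2]; split=> m.
    by apply: klinear_add => //; exact: klinear_scaler.
  by apply: (klinear_add (F := fun a => c *: f a m)) => //;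
    exact: (klinear_scaler (F := fun a => f a m)).
apply: (tp_ext (g1 := tp_lift T _)
               (g2 := fun z => c *: tp_lift T f z + tp_lift T g z)).
- exact: tp_lift_linear.
- by apply: klinear_add; [apply: klinear_scaler|]; exact: tp_lift_linear.
- by move=> m n; rewrite !tp_lift_mul.
Qed.

Lemma klinear_tp_lift_fun P Q (G : Q -> M -> N -> P) z :
  (forall x, kbilinear (G x)) -> (forall a b, klinear (fun x => G x a b)) ->
  klinear (fun x => tp_lift T (G x) z).
Proof.
move=> hG hG2 c x y.
have -> : G (c *: x + y) = fun a b => c *: G x a b + G y a b.
  by apply: funext2 => a b; rewrite hG2.
by rewrite tp_liftD.
Qed.

Lemma tp_lift_comp P P' (L : P -> P') (f : M -> N -> P) z :
  klinear L -> kbilinear f ->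
  L (tp_lift T f z) = tp_lift T (fun a b => L (f a b)) z.
Proof.
move=> hL [hf1 hf2].
have hLf : kbilinear (fun a b => L (f a b)) by split=> m; apply: klinear_comp.
apply: (tp_ext (g1 := fun z => L (tp_lift T f z))).
- by apply: klinear_comp => //; exact: tp_lift_linear.
- exact: tp_lift_linear.
- by move=> m n; rewrite !tp_lift_mul.
Qed.

Lemma tp_lift_tp_mul z : tp_lift T (tp_mul T) z = z.
Proof.
have hm := tp_mul_bilinear T.
apply: (tp_ext (g2 := id)); [exact: tp_lift_linear|by []|].
by move=> m n; rewrite tp_lift_mul.
Qed.
End TensorLift.
End Linearity.

(* The hooks are extended below by the linearity rules of the convolutions. *)
Ltac klin_hook := fail.
Ltac klin :=
  rewrite ?/sw ?/swA;
  repeat first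
  [ assumption
  | klin_hook
  | match goal with hq : forall _, _ |- klinear _ => exact: hq end
  | apply: klinear_id
  | apply: klinear_add
  | apply: klinear_tp_lift_fun; [intro; split=> ?|intros ? ?]
  | apply: klinear_tp_lift; [split=> ?|]
  | apply: klinear_tp_mull
  | apply: klinear_tp_mulr
  | apply: klinear_mulr
  | apply: klinear_mull
  | apply: klinear_scaler
  | apply: klinear_scalel
  | match goal with hf : kbilinear ?f |- klinear (?f _) => exact: (proj1 hf _) end
  | match goal with hf : kbilinear ?f |- klinear (fun x => ?f x _) => exact: (proj2 hf _) end
  | match goal with hf : kbilinear ?f |- _ => apply: (klinear_bilinl _ hf) end
  | match goal with hf : kbilinear ?f |- _ => apply: (klinear_bilinr _ hf) end
  | match goal with hL : klinear ?L |- _ => apply: (klinear_comp hL) end ].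

Ltac bilin_hook := fail.
Ltac mlin := lazymatch goal with
  | |- kbilinear _ => first [bilin_hook | split=> ?; klin]
  | |- ktrilinear _ => split; [|split] => ? ?; klin
  | _ => klin end.

Tactic Notation "lrewrite" uconstr(r) := rewrite r; [|mlin..].
Tactic Notation "lrewrite" "-" uconstr(r) := rewrite -r; [|mlin..].

Section TensorAlgebra.
Variables (k : comPzRingType) (R1 R2 : algType k) (T : tensor_product R1 R2).

Lemma mul_bilinear (R : algType k) : kbilinear (fun a b : R => a * b).
Proof. by split=> ?; klin. Qed.

Lemma mulr_assoc (R : algType k) (a b c : R) : a * b * c = a * (b * c).
Proof. by rewrite mulrA. Qed.

Definition tensor_mul (X Y : T) : T :=
  tp_lift T (fun a b => tp_lift T (fun c d => tp_mul T (a * c) (b * d)) Y) X.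

Lemma tensor_mul_bilinear : kbilinear tensor_mul.
Proof. have := tp_mul_bilinear T; rewrite /tensor_mul => hm; mlin. Qed.

Lemma tensor_mulE a b c d :
  tensor_mul (tp_mul T a b) (tp_mul T c d) = tp_mul T (a * c) (b * d).
Proof.
have hm := tp_mul_bilinear T.
by rewrite /tensor_mul !tp_lift_mul //; mlin.
Qed.

Lemma tensor_mulA X Y Z : tensor_mul (tensor_mul X Y) Z = tensor_mul X (tensor_mul Y Z).
Proof.
have hm := tensor_mul_bilinear.
move: X; apply: tp_ext; [klin|klin|] => a b; move: Y.
apply: tp_ext; [klin|klin|] => c d; move: Z.
apply: tp_ext; [klin|klin|] => e f.
by rewrite !tensor_mulE !mulrA.
Qed.

Lemma tensor_mul1l Y : tensor_mul (tp_mul T 1 1) Y = Y.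
Proof.
have hm := tensor_mul_bilinear; move: Y.
by apply: (tp_ext (g2 := id)); [klin|by []|] => c d; rewrite tensor_mulE !mul1r.
Qed.

Lemma tensor_mul1r Y : tensor_mul Y (tp_mul T 1 1) = Y.
Proof.
have hm := tensor_mul_bilinear; move: Y.
by apply: (tp_ext (g2 := id)); [klin|by []|] => c d; rewrite tensor_mulE !mulr1.
Qed.
End TensorAlgebra.

(** * Sweedler calculus and convolution *)

Section Hopf.
Variables (k : comPzRingType) (H A : algType k).
Variables (HH : tensor_product H H) (AH : tensor_product A H).
Variables (Delta : H -> HH) (eps : H -> k) (S : H -> H) (rho : A -> AH).
Hypothesis Delta_linear : klinear Delta.
Hypothesis eps_linear : klinear (eps : H -> k^o).
Hypothesis S_linear : klinear S.
Hypothesis coassoc : forall (P : lmodType k) (f : H -> H -> H -> P), ktrilinear f ->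
  forall h, sw Delta (fun x z => sw Delta (fun a b => f a b z) x) h
          = sw Delta (fun x y => sw Delta (fun a b => f x a b) y) h.
Hypothesis counit : forall h,
  sw Delta (fun x y => eps x *: y) h = h /\ sw Delta (fun x y => eps y *: x) h = h.
Hypothesis DeltaM : forall h g, Delta (h * g) =
  sw Delta (fun x y => sw Delta (fun a b => tp_mul HH (x * a) (y * b)) g) h.
Hypothesis Delta1 : Delta 1 = tp_mul HH 1 1.
Hypothesis epsM : forall h g, eps (h * g) = eps h * eps g.
Hypothesis eps1 : eps 1 = 1.
Hypothesis antipode : forall h, sw Delta (fun x y => S x * y) h = eps h *: 1
                             /\ sw Delta (fun x y => x * S y) h = eps h *: 1.
Hypothesis cocomm : forall h, Delta h = sw Delta (fun x y => tp_mul HH y x) h.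

Local Notation SW := (sw Delta).

Lemma sw_ext (P : lmodType k) (f g : H -> H -> P) h :
  (forall x y, f x y = g x y) -> SW f h = SW g h.
Proof. by move=> e; rewrite (funext2 e). Qed.

Lemma sw_comp (P Q : lmodType k) (L : P -> Q) (f : H -> H -> P) h :
  klinear L -> kbilinear f -> L (SW f h) = SW (fun a b => L (f a b)) h.
Proof. by move=> hL hf; rewrite /sw tp_lift_comp. Qed.

Lemma sw_linear (P : lmodType k) (f : H -> H -> P) : kbilinear f -> klinear (SW f).
Proof. by move=> hf; klin. Qed.

Lemma sw_tp_mul h : SW (tp_mul HH) h = Delta h.
Proof. by rewrite /sw tp_lift_tp_mul. Qed.

Lemma sw_swap (P : lmodType k) (f : H -> H -> P) h :
  kbilinear f -> SW f h = SW (fun x y => f y x) h.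
Proof.
move=> hf; have [hm1 hm2] := tp_mul_bilinear HH.
rewrite {1}/sw cocomm -/(SW _ h) (sw_comp (L := tp_lift HH f)); last by split.
  by apply: sw_ext => x y; rewrite tp_lift_mul.
exact: tp_lift_linear.
Qed.

Lemma sw_counitl (P : lmodType k) (F : H -> P) h :
  klinear F -> SW (fun x y => eps x *: F y) h = F h.
Proof.
move=> hF; rewrite -{2}(proj1 (counit h)) (sw_comp (L := F)) //; last by mlin.
by apply: sw_ext => x y; rewrite klinearZ.
Qed.

Lemma sw_counitr (P : lmodType k) (F : H -> P) h :
  klinear F -> SW (fun x y => eps y *: F x) h = F h.
Proof.
move=> hF; rewrite -{2}(proj2 (counit h)) (sw_comp (L := F)) //; last by mlin.
by apply: sw_ext => x y; rewrite klinearZ.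
Qed.

Lemma sw_mul (P : lmodType k) (f : H -> H -> P) h g : kbilinear f ->
  SW f (h * g) = SW (fun x y => SW (fun a b => f (x * a) (y * b)) g) h.
Proof.
move=> hf; have hl : klinear (tp_lift HH f) by exact: tp_lift_linear.
rewrite {1}/sw DeltaM (sw_comp (L := tp_lift HH f)) //; last by mlin.
apply: sw_ext => x y; rewrite (sw_comp (L := tp_lift HH f)) //; last by mlin.
by apply: sw_ext => a b; rewrite tp_lift_mul.
Qed.

Lemma sw1 (P : lmodType k) (f : H -> H -> P) : kbilinear f -> SW f 1 = f 1 1.
Proof. by move=> hf; rewrite /sw Delta1 tp_lift_mul. Qed.

Definition kquadrilinear (P : lmodType k) (F : H -> H -> H -> H -> P) :=
  [/\ (forall y a b, klinear (fun x => F x y a b)),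
      (forall x a b, klinear (fun y => F x y a b)),
      (forall x y b, klinear (fun a => F x y a b))
    & (forall x y a, klinear (fun b => F x y a b))].

Lemma sw_exchange (P : lmodType k) (F : H -> H -> H -> H -> P) h g :
  kquadrilinear F ->
  SW (fun x y => SW (fun a b => F x y a b) g) h
  = SW (fun a b => SW (fun x y => F x y a b) h) g.
Proof.
case=> h1 h2 h3 h4; rewrite /sw; move: (Delta h) (Delta g) => X Y; move: X.
apply: (tp_ext (g1 := fun X => tp_lift HH (fun x y => tp_lift HH (F x y) Y) X));
  [klin|klin|] => x y.
rewrite tp_lift_mul; last by mlin.
by congr (tp_lift HH _ Y); apply: funext2 => a b; rewrite tp_lift_mul //; mlin.
Qed.

(* The convolution algebra Hom(H, M) for a unital algebra structure (mul, one)
   on M; used for M = A, A (x) H and H (x) H. *)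
Section Convolution.
Variables (M : lmodType k) (mul : M -> M -> M) (one : M).
Hypothesis mulM_bilinear : kbilinear mul.
Hypothesis mulMA : forall a b c, mul (mul a b) c = mul a (mul b c).
Hypothesis mul1M : forall a, mul one a = a.
Hypothesis mulM1 : forall a, mul a one = a.

Definition convM (f g : H -> M) h := SW (fun x y => mul (f x) (g y)) h.
Definition unitM h : M := eps h *: one.

Lemma convM_linear f g : klinear f -> klinear g -> klinear (convM f g).
Proof. by move=> hf hg; apply: sw_linear; mlin. Qed.

Lemma convMA f g l : klinear f -> klinear g -> klinear l ->
  convM (convM f g) l = convM f (convM g l).
Proof.
move=> hf hg hl; apply: functional_extensionality => h; rewrite /convM.
transitivity (SW (fun x y => SW (fun a b => mul (mul (f a) (g b)) (l y)) x) h).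
  by apply: sw_ext => x y; rewrite (sw_comp (L := fun m => mul m (l y))) //; mlin.
rewrite (coassoc (f := fun a b c => mul (mul (f a) (g b)) (l c))); last by mlin.
apply: sw_ext => x y; rewrite (sw_comp (L := mul (f x))); [|mlin|mlin].
by apply: sw_ext => a b; rewrite mulMA.
Qed.

Lemma scale_mull c a b : mul (c *: a) b = c *: mul a b.
Proof. exact: (klinearZ _ _ (proj2 mulM_bilinear b)). Qed.

Lemma scale_mulr c a b : mul a (c *: b) = c *: mul a b.
Proof. exact: (klinearZ _ _ (proj1 mulM_bilinear a)). Qed.

Lemma conv1M f : klinear f -> convM unitM f = f.
Proof.
move=> hf; apply: functional_extensionality => h.
rewrite -(sw_counitl (F := f)) //.
by apply: sw_ext => x y; rewrite scale_mull mul1M.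
Qed.

Lemma convM1 f : klinear f -> convM f unitM = f.
Proof.
move=> hf; apply: functional_extensionality => h.
rewrite -(sw_counitr (F := f)) //.
by apply: sw_ext => x y; rewrite scale_mulr mulM1.
Qed.

Lemma convM_inv_uniq f g g' : klinear f -> klinear g -> klinear g' ->
  convM f g = unitM -> convM g' f = unitM -> g = g'.
Proof.
move=> hf hg hg' fg g'f.
by rewrite -[g]conv1M // -g'f convMA // fg convM1.
Qed.

Lemma convMC f g : klinear f -> klinear g ->
  (forall x y, mul (f x) (g y) = mul (g y) (f x)) -> convM f g = convM g f.
Proof.
move=> hf hg e; apply: functional_extensionality => h.
rewrite /convM sw_swap; last by mlin.
by apply: sw_ext => x y; rewrite e.
Qed.

Definition conv2M (F G : H -> H -> M) h g :=
  SW (fun x y => SW (fun a b => mul (F x a) (G y b)) g) h.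
Definition unit2M h g : M := eps h *: (eps g *: one).

Lemma conv2M_bilinear F G : kbilinear F -> kbilinear G -> kbilinear (conv2M F G).
Proof. by move=> hF hG; rewrite /conv2M; mlin. Qed.

Lemma unit2M_bilinear : kbilinear unit2M.
Proof. by rewrite /unit2M; mlin. Qed.

Lemma conv2MA F G K : kbilinear F -> kbilinear G -> kbilinear K ->
  conv2M (conv2M F G) K = conv2M F (conv2M G K).
Proof.
move=> hF hG hK; apply: funext2 => h g; rewrite /conv2M.
transitivity (SW (fun x y => SW (fun a b => SW (fun p q => SW (fun r s =>
   mul (mul (F p r) (G q s)) (K y b)) a) x) g) h).
  apply: sw_ext => x y; apply: sw_ext => a b.
  rewrite (sw_comp (L := fun m => mul m (K y b))); [|mlin|mlin].
  by apply: sw_ext => p q; rewrite (sw_comp (L := fun m => mul m (K y b))); mlin.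
transitivity (SW (fun x y => SW (fun p q => SW (fun a b => SW (fun r s =>
   mul (mul (F p r) (G q s)) (K y b)) a) g) x) h).
  apply: sw_ext => x y; rewrite sw_exchange //.
  by split=> *; mlin.
transitivity (SW (fun x y => SW (fun p q => SW (fun r z => SW (fun s b =>
   mul (mul (F p r) (G q s)) (K y b)) z) g) x) h).
  apply: sw_ext => x y; apply: sw_ext => p q.
  by rewrite (coassoc (f := fun r s b => mul (mul (F p r) (G q s)) (K y b))); mlin.
rewrite (coassoc (f := fun p q y => SW (fun r z => SW (fun s b =>
   mul (mul (F p r) (G q s)) (K y b)) z) g)); last by mlin.
apply: sw_ext => x y; symmetry.
transitivity (SW (fun a b => SW (fun q w => SW (fun s c =>
   mul (F x a) (mul (G q s) (K w c))) b) y) g).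
  apply: sw_ext => a b; rewrite (sw_comp (L := mul (F x a))); [|mlin|mlin].
  by apply: sw_ext => q w; rewrite (sw_comp (L := mul (F x a))); mlin.
rewrite sw_exchange; last by split=> *; mlin.
apply: sw_ext => q w; apply: sw_ext => a b; apply: sw_ext => s c.
by rewrite mulMA.
Qed.

Lemma conv1M2 F : kbilinear F -> conv2M unit2M F = F.
Proof.
move=> hF; apply: funext2 => h g.
rewrite /conv2M /unit2M -(sw_counitl (F := fun y => F y g) h); last by mlin.
apply: sw_ext => x y; rewrite -(sw_counitl (F := F y) g); last by mlin.
rewrite (sw_comp (L := fun m => eps x *: m)); [|mlin|mlin].
by apply: sw_ext => a b; rewrite !scale_mull mul1M.
Qed.

Lemma conv2M1 F : kbilinear F -> conv2M F unit2M = F.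
Proof.
move=> hF; apply: funext2 => h g.
rewrite /conv2M /unit2M -(sw_counitr (F := fun y => F y g) h); last by mlin.
apply: sw_ext => x y; rewrite -(sw_counitr (F := F x) g); last by mlin.
rewrite (sw_comp (L := fun m => eps y *: m)); [|mlin|mlin].
by apply: sw_ext => a b; rewrite !scale_mulr mulM1.
Qed.

Lemma conv2M_inv_uniq F G G' : kbilinear F -> kbilinear G -> kbilinear G' ->
  conv2M F G = unit2M -> conv2M G' F = unit2M -> G = G'.
Proof.
move=> hF hG hG' FG G'F.
by rewrite -[G]conv1M2 // -G'F conv2MA // FG conv2M1.
Qed.

Lemma conv2MC F G : kbilinear F -> kbilinear G ->
  (forall x y a b, mul (F x a) (G y b) = mul (G y b) (F x a)) ->
  conv2M F G = conv2M G F.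
Proof.
move=> hF hG e; apply: funext2 => h g; rewrite /conv2M sw_swap; last by mlin.
apply: sw_ext => x y; rewrite sw_swap; last by mlin.
by apply: sw_ext => a b; rewrite e.
Qed.
End Convolution.

Lemma antipodeM h g : S (h * g) = S g * S h.
Proof.
have hm := mul_bilinear H.
suff /(congr1 (fun F => F h g)) : (fun a b => S b * S a) = (fun a b => S (a * b)) by [].
apply: (@conv2M_inv_uniq H (fun a b => a * b) 1 hm (@mulr_assoc _ H)
  (@mul1r H) (@mulr1 H) (fun a b => a * b)); [mlin|mlin|mlin| |].
- apply: funext2 => x y; rewrite /conv2M /unit2M.
  transitivity (SW (fun a b => a * (eps y *: 1) * S b) x).
    apply: sw_ext => a b.
    rewrite -(proj2 (antipode y)) (sw_comp (L := fun m => a * m * S b)); [|mlin|mlin].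
    by apply: sw_ext => p q; rewrite !mulrA.
  transitivity (eps y *: SW (fun a b => a * S b) x).
    rewrite (sw_comp (L := fun m => eps y *: m)); [|mlin|mlin].
    by apply: sw_ext => a b; rewrite -scalerAr -scalerAl mulr1.
  by rewrite (proj2 (antipode x)) scalerA mulrC -scalerA.
- apply: funext2 => x y; rewrite /conv2M /unit2M.
  by rewrite scalerA -epsM -(proj1 (antipode (x * y))) sw_mul //; mlin.
Qed.

Local Notation mulHH := (tensor_mul (T := HH)).
Local Notation oneHH := (tp_mul HH 1 1).

Lemma Delta_antipode h : Delta (S h) = SW (fun x y => tp_mul HH (S y) (S x)) h.
Proof.
have hm : kbilinear mulHH by exact: tensor_mul_bilinear.
have htp := tp_mul_bilinear HH.
pose i1 x := tp_mul HH x 1; pose i2 x := tp_mul HH 1 x.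
have hi1 : klinear i1 by rewrite /i1; mlin.
have hi2 : klinear i2 by rewrite /i2; mlin.
have i1M a b : mulHH (i1 a) (i1 b) = i1 (a * b) by rewrite tensor_mulE mulr1.
have i2M a b : mulHH (i2 a) (i2 b) = i2 (a * b) by rewrite tensor_mulE mulr1.
have antipode_i (i : H -> HH) : klinear i -> (forall a b, mulHH (i a) (i b) = i (a * b)) ->
    i 1 = oneHH -> convM mulHH (fun x => i (S x)) i = unitM oneHH.
  move=> hi iM i1'; apply: functional_extensionality => y.
  rewrite /convM /unitM; transitivity (i (SW (fun a b => S a * b) y)).
    by rewrite (sw_comp (L := i)); [apply: sw_ext => a b; rewrite iM|mlin|mlin].
  by rewrite (proj1 (antipode y)) (klinearZ _ _ hi) i1'.
(* Delta o S and (S (x) S) o tau o Delta are a right and a left convolution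
   inverse of Delta = i1 * i2 in Hom(H, H (x) H). *)
suff: (fun h => Delta (S h)) = convM mulHH (fun x => i2 (S x)) (fun x => i1 (S x)).
  by move/(congr1 (fun F => F h)) => ->; apply: sw_ext => a b; rewrite tensor_mulE mulr1 mul1r.
apply: (@convM_inv_uniq _ mulHH oneHH hm (@tensor_mulA _ _ _ HH)
  (@tensor_mul1l _ _ _ HH) (@tensor_mul1r _ _ _ HH) Delta); [mlin|mlin|mlin| |].
- apply: functional_extensionality => x; rewrite /convM /unitM.
  transitivity (Delta (SW (fun a b => a * S b) x)).
    by rewrite (sw_comp (L := Delta)); [apply: sw_ext => a b; rewrite DeltaM|mlin|mlin].
  by rewrite (proj2 (antipode x)) (klinearZ _ _ Delta_linear) Delta1.
- have -> : Delta = convM mulHH i1 i2.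
    apply: functional_extensionality => y.
    by rewrite -sw_tp_mul; apply: sw_ext => a b; rewrite tensor_mulE mulr1 mul1r.
  lrewrite (convMA hm (@tensor_mulA _ _ _ HH)).
  lrewrite -(convMA hm (@tensor_mulA _ _ _ HH) (f := fun x => i1 (S x))).
  rewrite antipode_i // conv1M //; [exact: antipode_i|exact: tensor_mul1l].
Qed.

Lemma sw_antipode (P : lmodType k) (f : H -> H -> P) h : kbilinear f ->
  SW f (S h) = SW (fun x y => f (S x) (S y)) h.
Proof.
move=> hf; have htp := tp_mul_bilinear HH.
rewrite {1}/sw Delta_antipode (sw_comp (L := tp_lift HH f)); [|exact: tp_lift_linear|mlin].
by rewrite sw_swap; [apply: sw_ext => x y; rewrite tp_lift_mul|mlin].
Qed.

Lemma antipode1 : S 1 = 1.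
Proof. by have := proj1 (antipode 1); rewrite sw1 ?mulr1 ?eps1 ?scale1r //; mlin. Qed.

Lemma antipodeK h : S (S h) = h.
Proof.
have hm := mul_bilinear H.
suff /(congr1 (fun F => F h)) : (fun x => S (S x)) = id by [].
apply: (@convM_inv_uniq _ (fun a b : H => a * b) 1 hm (@mulr_assoc _ H)
  (@mul1r H) (@mulr1 H) S); [mlin|mlin|mlin| |].
- apply: functional_extensionality => x; rewrite /convM /unitM.
  transitivity (S (SW (fun a b => S a * b) x)).
    rewrite (sw_comp (L := S)); [|mlin|mlin].
    by rewrite sw_swap; [apply: sw_ext => a b; rewrite antipodeM|mlin].
  by rewrite (proj1 (antipode x)) (klinearZ _ _ S_linear) antipode1.
- by apply: functional_extensionality => x; rewrite /convM /unitM (proj2 (antipode x)).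
Qed.

Lemma eps_antipode h : eps (S h) = eps h.
Proof.
rewrite -(sw_counitr (F := fun x => (eps (S x) : k^o)) h); last by mlin.
have -> : eps h = (eps (SW (fun x y => S x * y) h) : k^o).
  by rewrite (proj1 (antipode h)) (klinearZ _ _ eps_linear) eps1 [_ *: _]mulr1.
rewrite (sw_comp (L := (eps : H -> k^o))); [|mlin|mlin].
by apply: (sw_ext (P := k^o)) => x y; rewrite epsM [_ *: _]mulrC.
Qed.

(** * Comodule algebras *)

Hypothesis rho_linear : klinear rho.
Hypothesis rhoM : forall a c, rho (a * c) =
  swA rho (fun a1 x => swA rho (fun c1 y => tp_mul AH (a1 * c1) (x * y)) c) a.
Hypothesis rho1 : rho 1 = tp_mul AH 1 1.

Local Notation mulA := (fun a b : A => a * b).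
Local Notation mulAH := (tensor_mul (T := AH)).
Local Notation oneAH := (tp_mul AH 1 1).
Local Notation convA := (convM mulA).
Local Notation unitA := (unitM (1 : A)).
Local Notation convAH := (convM mulAH).
Local Notation unitAH := (unitM oneAH).

Definition inA (a : A) : AH := tp_mul AH a 1.
Definition inH (x : H) : AH := tp_mul AH 1 x.

Lemma inA_linear : klinear inA.
Proof. by have hm := tp_mul_bilinear AH; rewrite /inA; mlin. Qed.

Lemma inH_linear : klinear inH.
Proof. by have hm := tp_mul_bilinear AH; rewrite /inH; mlin. Qed.

Lemma mulA_bilinear : kbilinear mulA.
Proof. exact: mul_bilinear. Qed.

Lemma mulAH_bilinear : kbilinear mulAH.
Proof. exact: tensor_mul_bilinear. Qed.

(* Bilinear maps H -> H -> A stand for linear maps H (x) H -> A; with the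
   convolution [conv2M] they form the convolution algebra Hom(H (x) H, A).
   [leftF f] and [rightF f] are f (x) eps and eps (x) f, [mulF f] is f o m. *)
Definition leftF (f : H -> A) h l := eps l *: f h.
Definition rightF (f : H -> A) h l := eps h *: f l.
Definition mulF (f : H -> A) h l := f (h * l).
Definition actF (a : H -> A -> A) (v : H -> A) h l := a h (v l).
Definition actSF (a : H -> A -> A) (v : H -> A) h l := a (S l) (v h).

Ltac klin_hook ::= first
  [ apply: inA_linear | apply: inH_linear
  | apply: (klinear_comp inA_linear) | apply: (klinear_comp inH_linear)
  | apply: convM_linear; first [exact: mulA_bilinear | exact: mulAH_bilinear]
  | progress rewrite ?/leftF ?/rightF ?/mulF ?/actF ?/actSF ?/act ?/conv2M
                     ?/unit2M ?/unitM ].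
Ltac bilin_hook ::=
  apply: conv2M_bilinear; first [exact: mulA_bilinear | exact: mulAH_bilinear | mlin].

Lemma rho_mul a c : rho (a * c) = mulAH (rho a) (rho c).
Proof. exact: rhoM. Qed.

Lemma inAM a b : mulAH (inA a) (inA b) = inA (a * b).
Proof. by rewrite tensor_mulE mulr1. Qed.

Lemma inHM a b : mulAH (inH a) (inH b) = inH (a * b).
Proof. by rewrite tensor_mulE mulr1. Qed.

Lemma inA_inH a x : mulAH (inA a) (inH x) = tp_mul AH a x.
Proof. by rewrite tensor_mulE mulr1 mul1r. Qed.

Lemma inH_inA a x : mulAH (inH x) (inA a) = tp_mul AH a x.
Proof. by rewrite tensor_mulE mulr1 mul1r. Qed.

Lemma convAA f g l : klinear f -> klinear g -> klinear l ->
  convA (convA f g) l = convA f (convA g l).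
Proof. exact: (convMA mulA_bilinear (@mulr_assoc _ A)). Qed.

Lemma conv1A f : klinear f -> convA unitA f = f.
Proof. exact: (conv1M mulA_bilinear (@mul1r A)). Qed.

Lemma convA1 f : klinear f -> convA f unitA = f.
Proof. exact: (convM1 mulA_bilinear (@mulr1 A)). Qed.

Lemma convAHA f g l : klinear f -> klinear g -> klinear l ->
  convAH (convAH f g) l = convAH f (convAH g l).
Proof. exact: (convMA mulAH_bilinear (@tensor_mulA _ _ _ AH)). Qed.

Lemma conv1AH f : klinear f -> convAH unitAH f = f.
Proof. exact: (conv1M mulAH_bilinear (@tensor_mul1l _ _ _ AH)). Qed.

Lemma convAH_inA_inH f : klinear f ->
  convAH (fun x => inA (f x)) inH = convAH inH (fun x => inA (f x)).
Proof.
by move=> hf; apply: (convMC mulAH_bilinear) => [||x y]; [mlin|mlin|rewrite inA_inH inH_inA].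
Qed.

Lemma rho_conv f g : klinear f -> klinear g ->
  (fun h => rho (convA f g h)) = convAH (fun x => rho (f x)) (fun x => rho (g x)).
Proof.
move=> hf hg; apply: functional_extensionality => h; have hm := mulA_bilinear.
rewrite /convM (sw_comp (L := rho)); [|mlin|mlin].
by apply: sw_ext => x y; rewrite rho_mul.
Qed.

Lemma conv_inA f g : klinear f -> klinear g ->
  convAH (fun x => inA (f x)) (fun x => inA (g x)) = (fun h => inA (convA f g h)).
Proof.
move=> hf hg; apply: functional_extensionality => h; have hm := mulA_bilinear.
rewrite /convM (sw_comp (L := inA)); [|mlin|mlin].
by apply: sw_ext => x y; rewrite inAM.
Qed.

Lemma conv_inH_antipode : convAH inH (fun x => inH (S x)) = unitAH.
Proof.
have hm := mul_bilinear H; apply: functional_extensionality => h.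
rewrite /convM /unitM; transitivity (inH (SW (fun a b => a * S b) h)).
  by rewrite (sw_comp (L := inH)); [apply: sw_ext => a b; rewrite inHM|mlin|mlin].
by rewrite (proj2 (antipode h)) (klinearZ _ _ inH_linear).
Qed.

Lemma conv_antipode_inH : convAH (fun x => inH (S x)) inH = unitAH.
Proof.
have hm := mul_bilinear H; apply: functional_extensionality => h.
rewrite /convM /unitM; transitivity (inH (SW (fun a b => S a * b) h)).
  by rewrite (sw_comp (L := inH)); [apply: sw_ext => a b; rewrite inHM|mlin|mlin].
by rewrite (proj1 (antipode h)) (klinearZ _ _ inH_linear).
Qed.

Definition Bvalued (f : H -> A) := forall h, coinv rho (f h).
Definition colinearF (f : H -> A) :=
  (fun h => rho (f h)) = convAH (fun x => inA (f x)) inH.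
Definition anticolinearF (f : H -> A) :=
  (fun h => rho (f h)) = convAH (fun x => inH (S x)) (fun x => inA (f x)).

Lemma colinearP f : colinear Delta rho f <-> colinearF f.
Proof.
rewrite /colinearF; split=> e.
  by apply: functional_extensionality => h; rewrite e; apply: sw_ext => x y; rewrite inA_inH.
by move=> h; rewrite (congr1 (fun F => F h) e); apply: sw_ext => x y; rewrite inA_inH.
Qed.

Lemma anticolinearP f :
  (forall h, rho (f h) = SW (fun x y => tp_mul AH (f y) (S x)) h) <-> anticolinearF f.
Proof.
rewrite /anticolinearF; split=> e.
  by apply: functional_extensionality => h; rewrite e; apply: sw_ext => x y; rewrite inH_inA.
by move=> h; rewrite (congr1 (fun F => F h) e); apply: sw_ext => x y; rewrite inH_inA.
Qed.

Lemma BvaluedP f : Bvalued f <-> (fun h => rho (f h)) = (fun h => inA (f h)).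
Proof.
split; first exact: functional_extensionality.
by move=> e h; rewrite /coinv (congr1 (fun F => F h) e).
Qed.

Lemma rho_unit : (fun h => rho (unitA h)) = unitAH.
Proof.
by apply: functional_extensionality => h; rewrite /unitM (klinearZ _ _ rho_linear) rho1.
Qed.

Lemma inA_unit : (fun h => inA (unitA h)) = unitAH.
Proof. by apply: functional_extensionality => h; rewrite /unitM (klinearZ _ _ inA_linear). Qed.

Lemma Bvalued_unit : Bvalued unitA.
Proof. by apply/BvaluedP; rewrite rho_unit inA_unit. Qed.

Lemma Bvalued_conv f g : klinear f -> klinear g ->
  Bvalued f -> Bvalued g -> Bvalued (convA f g).
Proof.
move=> hf hg /BvaluedP cf /BvaluedP cg; apply/BvaluedP.
by rewrite rho_conv // cf cg conv_inA.
Qed.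

Lemma Bvalued_conv_col_acol f g : klinear f -> klinear g ->
  colinearF f -> anticolinearF g -> Bvalued (convA f g).
Proof.
move=> hf hg cf cg; apply/BvaluedP.
rewrite rho_conv // cf cg; lrewrite convAHA; lrewrite -(@convAHA inH).
by rewrite conv_inH_antipode; lrewrite conv1AH; lrewrite conv_inA.
Qed.

Lemma Bvalued_conv_acol_col g f : klinear g -> klinear f ->
  anticolinearF g -> colinearF f -> Bvalued (convA g f).
Proof.
move=> hg hf cg cf; apply/BvaluedP.
rewrite rho_conv // cg cf; lrewrite convAHA; lrewrite -(@convAHA (fun x => inA (g x))).
rewrite conv_inA //; lrewrite convAH_inA_inH; lrewrite -convAHA.
by rewrite conv_antipode_inH; lrewrite conv1AH.
Qed.

Lemma colinear_conv_B_col f g : klinear f -> klinear g ->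
  Bvalued f -> colinearF g -> colinearF (convA f g).
Proof.
move=> hf hg /BvaluedP cf cg.
by rewrite /colinearF rho_conv // cf cg; lrewrite -convAHA; rewrite conv_inA.
Qed.

Lemma colinear_conv_col_B g f : klinear g -> klinear f ->
  colinearF g -> Bvalued f -> colinearF (convA g f).
Proof.
move=> hg hf cg /BvaluedP cf.
rewrite /colinearF rho_conv // cg cf; lrewrite convAHA; lrewrite -convAH_inA_inH.
by lrewrite -convAHA; rewrite conv_inA.
Qed.

(* Both [rho o U] and [inH o S * inA o U] are convolution inverses of [rho o T]. *)
Lemma anticolinear_inverse T U : klinear T -> klinear U -> colinearF T ->
  convA T U = unitA -> convA U T = unitA -> anticolinearF U.
Proof.
move=> hT hU cT TU UT.
apply: (convM_inv_uniq mulAH_bilinear (@tensor_mulA _ _ _ AH) (@tensor_mul1l _ _ _ AH)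
  (@tensor_mul1r _ _ _ AH) (f := fun x => rho (T x))); [mlin|mlin|mlin| |].
  by rewrite -rho_conv // TU rho_unit.
rewrite cT; lrewrite convAHA; lrewrite -(@convAHA (fun x => inA (U x))).
rewrite conv_inA // UT inA_unit; lrewrite conv1AH.
exact: conv_antipode_inH.
Qed.

Lemma coinvZ c b : coinv rho b -> coinv rho (c *: b).
Proof.
by rewrite /coinv => e; rewrite (klinearZ _ _ rho_linear) e -(klinearZ _ _ inA_linear).
Qed.

Lemma anticolinear_mull b g : klinear g -> coinv rho b ->
  anticolinearF g -> anticolinearF (fun y => b * g y).
Proof.
move=> hg cb cg; have hm := mulAH_bilinear.
apply: functional_extensionality => h; rewrite rho_mul cb (congr1 (fun F => F h) cg).
rewrite /convM (sw_comp (L := mulAH (inA b))); [|mlin|mlin].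
by apply: sw_ext => x y; rewrite -tensor_mulA inA_inH -inH_inA tensor_mulA inAM.
Qed.

Lemma sw_mulmid b f g h : SW (fun x y => f x * b * g y) h = convA f (fun y => b * g y) h.
Proof. by apply: sw_ext => x y; rewrite mulrA. Qed.

Lemma convA_mull b f g : klinear f -> klinear g ->
  convA (fun y => b * f y) g = (fun h => b * convA f g h).
Proof.
move=> hf hg; have hm := mulA_bilinear; apply: functional_extensionality => h.
by rewrite /convM (sw_comp (L := fun a => b * a)); [apply: sw_ext => x y; rewrite mulrA|mlin|mlin].
Qed.

Lemma convA_scalel b g : klinear g -> convA (fun x => eps x *: b) g = (fun h => b * g h).
Proof.
move=> hg; apply: functional_extensionality => h.
rewrite -(sw_counitl (F := fun y => b * g y)); last by mlin.
by apply: sw_ext => x y; rewrite scalerAl.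
Qed.

Section Omega.
Variable g : H -> A.
Hypothesis omega_g : OmegaA Delta rho g.

Lemma omega_linear : klinear g.
Proof. by case: omega_g. Qed.

Lemma omega_colinear : colinearF g.
Proof. by case: omega_g => _ /colinearP. Qed.

Lemma omega_conv_antipode : convA g (fun x => g (S x)) = unitA.
Proof.
case: omega_g => hg _ gM g1; have hm := mul_bilinear H.
apply: functional_extensionality => x; rewrite /convM.
transitivity (g (SW (fun a b => a * S b) x)).
  by rewrite (sw_comp (L := g)); [apply: sw_ext => a b; rewrite gM|mlin|mlin].
by rewrite (proj2 (antipode x)) (klinearZ _ _ hg) g1.
Qed.

Lemma omega_antipode_conv : convA (fun x => g (S x)) g = unitA.
Proof.
case: omega_g => hg _ gM g1; have hm := mul_bilinear H.
apply: functional_extensionality => x; rewrite /convM.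
transitivity (g (SW (fun a b => S a * b) x)).
  by rewrite (sw_comp (L := g)); [apply: sw_ext => a b; rewrite gM|mlin|mlin].
by rewrite (proj1 (antipode x)) (klinearZ _ _ hg) g1.
Qed.

Lemma omega_antipode_anticolinear : anticolinearF (fun x => g (S x)).
Proof.
have hg := omega_linear; have htp := tp_mul_bilinear AH.
apply/anticolinearP => h; rewrite (congr1 (fun F => F (S h)) omega_colinear).
rewrite /convM sw_antipode; last by mlin.
by rewrite sw_swap; [apply: sw_ext => x y; rewrite inA_inH|mlin].
Qed.
End Omega.

(** * The cleft case *)

Variables (t u : H -> A).
Hypothesis t_linear : klinear t.
Hypothesis u_linear : klinear u.
Hypothesis t_colinear : colinear Delta rho t.
Hypothesis conv_t_u : convA t u = unitA.
Hypothesis conv_u_t : convA u t = unitA.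
Hypothesis B_comm : forall b1 b2, coinv rho b1 -> coinv rho b2 -> b1 * b2 = b2 * b1.

Local Notation act := (act Delta t u).

Lemma t_colinearF : colinearF t.
Proof. exact/colinearP. Qed.

Lemma u_anticolinear : anticolinearF u.
Proof. exact: (anticolinear_inverse t_linear u_linear t_colinearF). Qed.

Lemma act_linear h : klinear (act h).
Proof. by rewrite /act; mlin. Qed.

Lemma act_linear_fun b : klinear (fun h => act h b).
Proof. by rewrite /act; mlin. Qed.

Lemma actE h b : act h b = convA t (fun y => b * u y) h.
Proof. exact: sw_mulmid. Qed.

Lemma act_Bvalued h b : coinv rho b -> coinv rho (act h b).
Proof.
move=> cb; have hm := mulA_bilinear; rewrite actE.
apply: (Bvalued_conv_col_acol t_linear) => //; first by mlin.
  exact: t_colinearF.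
by apply: anticolinear_mull => //; exact: u_anticolinear.
Qed.

Lemma act_one h : act h 1 = unitA h.
Proof.
rewrite actE -conv_t_u; congr (convA t _ h).
by apply: functional_extensionality => y; rewrite mul1r.
Qed.

Lemma act_mul h b c : act h (b * c) = convA (fun h => act h b) (fun h => act h c) h.
Proof.
have hm := mulA_bilinear.
have e b' : (fun h => act h b') = convA t (fun y => b' * u y).
  by apply: functional_extensionality => x; rewrite actE.
rewrite !e; lrewrite convAA; lrewrite -(@convAA (fun y => b * u y)).
rewrite convA_mull // conv_u_t.
have -> : (fun h => b * unitA h) = (fun x => eps x *: b).
  by apply: functional_extensionality => x; rewrite /unitM mulr_algr.
rewrite actE convA_scalel; last by mlin.
by congr (convA t _ h); apply: functional_extensionality => y; rewrite mulrA.
Qed.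

Lemma act1 b : coinv rho b -> act 1 b = b.
Proof.
have htp := tp_mul_bilinear AH.
have t1 : coinv rho (t 1) by rewrite /coinv t_colinear sw1 //; mlin.
move=> cb; rewrite /act sw1; last by mlin.
have := congr1 (fun F => F 1) conv_t_u; rewrite /convM sw1 ?/unitM; last by mlin.
by rewrite (B_comm t1 cb) -mulrA => ->; rewrite eps1 scale1r mulr1.
Qed.

Lemma convAC f g : klinear f -> klinear g -> Bvalued f -> Bvalued g -> convA f g = convA g f.
Proof. by move=> hf hg cf cg; apply: (convMC mulA_bilinear) => // x y; exact: B_comm. Qed.

(* The action on B does not depend on the cleaving: for another cleaving
   (T, U), the maps [T * u] and [t * U] are B-valued and mutually inverse. *)
Lemma act_cleaving T U b : klinear T -> klinear U -> colinearF T ->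
  convA T U = unitA -> convA U T = unitA -> coinv rho b ->
  (fun h => act h b) = convA T (fun y => b * U y).
Proof.
move=> hT hU cT TU UT cb; have hm := mulA_bilinear.
have cU := anticolinear_inverse hT hU cT TU UT.
pose g := convA T u; pose g' := convA t U.
have cg : Bvalued g := Bvalued_conv_col_acol hT u_linear cT u_anticolinear.
have cg' : Bvalued g' := Bvalued_conv_col_acol t_linear hU t_colinearF cU.
have eT : T = convA g t by rewrite /g convAA // conv_u_t convA1.
have eU : (fun y => b * U y) = convA (fun y => b * u y) g'.
  by lrewrite convA_mull; rewrite /g'; lrewrite -convAA; rewrite conv_u_t conv1A.
have gg' : convA g g' = unitA.
  by rewrite /g /g'; lrewrite convAA; lrewrite -(@convAA u); rewrite conv_u_t conv1A.
have ea : (fun h => act h b) = convA t (fun y => b * u y).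
  by apply: functional_extensionality => h; rewrite actE.
rewrite eU eT; lrewrite convAA; lrewrite -(@convAA t); rewrite -ea.
lrewrite -convAA; rewrite (@convAC g); [|mlin|mlin|done|by move=> h; exact: act_Bvalued].
by lrewrite convAA; rewrite gg' convA1 //; exact: act_linear_fun.
Qed.

Lemma act_omega g b : OmegaA Delta rho g -> coinv rho b ->
  (fun h => act h b) = convA g (fun y => b * g (S y)).
Proof.
move=> og; apply: act_cleaving.
- exact: omega_linear og.
- by have hg := omega_linear og; mlin.
- exact: omega_colinear.
- exact: omega_conv_antipode.
- exact: omega_antipode_conv.
Qed.

(** * Cocycles *)

Local Notation conv2A := (conv2M mulA).
Local Notation unit2A := (unit2M (1 : A)).

Lemma conv2AA F G K : kbilinear F -> kbilinear G -> kbilinear K ->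
  conv2A (conv2A F G) K = conv2A F (conv2A G K).
Proof. exact: (conv2MA mulA_bilinear (@mulr_assoc _ A)). Qed.

Lemma conv1A2 F : kbilinear F -> conv2A unit2A F = F.
Proof. exact: (conv1M2 mulA_bilinear (@mul1r A)). Qed.

Lemma conv2AC F G : kbilinear F -> kbilinear G ->
  (forall x a, coinv rho (F x a)) -> (forall y b, coinv rho (G y b)) ->
  conv2A F G = conv2A G F.
Proof. by move=> hF hG cF cG; apply: (conv2MC mulA_bilinear) => // *; exact: B_comm. Qed.

Lemma sw_counit2 (P : lmodType k) (c : P) h :
  SW (fun a b => eps a *: (eps b *: c)) h = eps h *: c.
Proof. by rewrite (sw_counitl (F := fun b => eps b *: c)) //; mlin. Qed.

Lemma conv2_leftF f g : klinear f -> klinear g ->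
  conv2A (leftF f) (leftF g) = leftF (convA f g).
Proof.
move=> hf hg; have hm := mulA_bilinear; apply: funext2 => h l.
rewrite /conv2M /leftF /convM (sw_comp (L := fun a => eps l *: a)); [|mlin|mlin].
apply: sw_ext => x y; rewrite -sw_counit2; apply: sw_ext => a b.
by rewrite -!scalerAl -!scalerAr !scalerA mulrC.
Qed.

Lemma conv2_rightF f g : klinear f -> klinear g ->
  conv2A (rightF f) (rightF g) = rightF (convA f g).
Proof.
move=> hf hg; have hm := mulA_bilinear; apply: funext2 => h l.
rewrite /conv2M /rightF /convM -(sw_counit2 (SW (fun a b => f a * g b) l) h).
apply: sw_ext => x y; rewrite (sw_comp (L := fun a => eps x *: (eps y *: a))); [|mlin|mlin].
by apply: sw_ext => a b; rewrite -!scalerAl -!scalerAr.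
Qed.

Lemma conv2_left_right f g : klinear f -> klinear g ->
  conv2A (leftF f) (rightF g) = (fun h l => f h * g l).
Proof.
move=> hf hg; have hm := mulA_bilinear; apply: funext2 => h l.
rewrite /conv2M /leftF /rightF -(sw_counitr (F := fun x => f x * g l) h); last by mlin.
apply: sw_ext => x y; rewrite -(sw_counitl (F := fun b => eps y *: (f x * g b)) l); last by mlin.
by apply: sw_ext => a b; rewrite -!scalerAl -!scalerAr !scalerA mulrC.
Qed.

Lemma conv2_right_left f g : klinear f -> klinear g ->
  conv2A (rightF g) (leftF f) = (fun h l => g l * f h).
Proof.
move=> hf hg; have hm := mulA_bilinear; apply: funext2 => h l.
rewrite /conv2M /leftF /rightF -(sw_counitl (F := fun x => g l * f x) h); last by mlin.
apply: sw_ext => x y; rewrite -(sw_counitr (F := fun b => eps x *: (g b * f y)) l); last by mlin.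
by apply: sw_ext => a b; rewrite -!scalerAl -!scalerAr !scalerA mulrC.
Qed.

Lemma conv2_mulF f g : klinear f -> klinear g ->
  conv2A (mulF f) (mulF g) = mulF (convA f g).
Proof.
move=> hf hg; have hm := mulA_bilinear.
by apply: funext2 => h l; rewrite /mulF /convM sw_mul //; mlin.
Qed.

Lemma leftF_unit : leftF unitA = unit2A.
Proof. by apply: funext2 => h l; rewrite /leftF /unitM /unit2M scalerA mulrC -scalerA. Qed.

Lemma rightF_unit : rightF unitA = unit2A.
Proof. by []. Qed.

Lemma conv2_actF w v : klinear w -> klinear v ->
  conv2A (actF act w) (actF act v) = actF act (convA w v).
Proof.
move=> hw hv; apply: funext2 => h l; rewrite /conv2M /actF.
rewrite sw_exchange; last by split=> *; mlin.
transitivity (SW (fun a b => act h (w a * v b)) l).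
  by apply: sw_ext => a b; rewrite act_mul.
by rewrite /convM (sw_comp (L := act h)) //; [exact: act_linear|mlin].
Qed.

Lemma conv2_actF_leftF c : klinear c ->
  conv2A (actF act c) (leftF c) = (fun h l => SW (fun x y => act x (c l) * c y) h).
Proof.
move=> hc; apply: funext2 => h l; rewrite /conv2M /actF /leftF; apply: sw_ext => x y.
rewrite -(sw_counitr (F := fun a => act x (c a) * c y) l); last by mlin.
by apply: sw_ext => a b; rewrite scalerAr.
Qed.

Lemma mulF_omega g : OmegaA Delta rho g -> mulF g = conv2A (leftF g) (rightF g).
Proof.
by case=> hg _ gM _; rewrite conv2_left_right //; apply: funext2 => h l; rewrite /mulF gM.
Qed.

Lemma mulF_omega_antipode g : OmegaA Delta rho g ->
  mulF (fun x => g (S x)) = conv2A (rightF (fun x => g (S x))) (leftF (fun x => g (S x))).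
Proof.
case=> hg _ gM _; rewrite conv2_right_left; [|mlin|mlin].
by apply: funext2 => h l; rewrite /mulF antipodeM gM.
Qed.

Lemma actF_omega g v : OmegaA Delta rho g -> klinear v -> Bvalued v ->
  actF act v = conv2A (conv2A (leftF g) (rightF v)) (leftF (fun x => g (S x))).
Proof.
move=> og hv cv; have hg := omega_linear og.
apply: funext2 => h l; rewrite /actF (congr1 (fun F => F h) (act_omega og (cv l))).
rewrite conv2_left_right // /conv2M /convM; apply: sw_ext => x y.
rewrite mulrA -(sw_counitr (F := fun a => g x * v a * g (S y)) l); last by mlin.
by apply: sw_ext => a b; rewrite /leftF scalerAr.
Qed.

Lemma actSF_omega g w : OmegaA Delta rho g -> klinear w -> Bvalued w ->
  actSF act w = conv2A (conv2A (rightF (fun x => g (S x))) (leftF w)) (rightF g).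
Proof.
move=> og hw cw; have hg := omega_linear og.
rewrite conv2_right_left; [|mlin|mlin]; apply: funext2 => h l.
rewrite /actSF (congr1 (fun F => F (S l)) (act_omega og (cw h))) /convM.
rewrite sw_antipode; last by mlin.
rewrite (sw_ext (g := fun x y => g (S x) * w h * g y)) => [|x y]; last by rewrite antipodeK mulrA.
rewrite /conv2M /rightF -(sw_counitr (F := fun x => SW (fun a b => g (S a) * w x * g b) l) h);
  last by mlin.
apply: sw_ext => x y; rewrite (sw_comp (L := fun z => eps y *: z)); [|mlin|mlin].
by apply: sw_ext => a b; rewrite scalerAr.
Qed.

(* Z^1(H, B), with the cocycle identity read in Hom(H (x) H, A). *)
Definition cocycle (v : H -> A) := [/\ klinear v, Bvalued v,
  (exists w, [/\ klinear w, Bvalued w, convA v w = unitA & convA w v = unitA])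
  & mulF v = conv2A (actF act v) (leftF v)].

Lemma cocycleP v : Z1 Delta eps rho t u v <-> cocycle v.
Proof.
split.
- case=> [[hv cv] [[w [[hw cw] [vw wv]]] coc]]; split => //.
    by exists w; split => //; apply: functional_extensionality.
  by rewrite conv2_actF_leftF //; apply: funext2 => h l; rewrite /mulF coc.
- case=> hv cv [w [hw cw vw wv]] coc; split; [by []|split].
    by exists w; split=> //; split=> h;
      [exact: (congr1 (fun F => F h) vw)|exact: (congr1 (fun F => F h) wv)].
  by move=> h l; rewrite -/(mulF v h l) coc conv2_actF_leftF.
Qed.

Lemma cocycle1 v : cocycle v -> v 1 = 1.
Proof.
case=> hv cv [w [hw cw _ wv]] coc.
have vv : v 1 = v 1 * v 1.
  have := congr1 (fun F => F 1 1) coc; rewrite conv2_actF_leftF // /mulF mulr1.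
  by rewrite sw1 ?act1 //; mlin.
have wv1 : w 1 * v 1 = 1.
  by have := congr1 (fun F => F 1) wv; rewrite /convM /unitM sw1 ?eps1 ?scale1r //; mlin.
by move: (congr1 (fun z => w 1 * z) vv); rewrite mulrA wv1 mul1r.
Qed.

Lemma cocycle_unit : cocycle unitA.
Proof.
have hu : klinear unitA by mlin.
split => //; first exact: Bvalued_unit.
  by exists unitA; split => //; [exact: Bvalued_unit|exact: conv1A..].
have -> : actF act unitA = unit2A.
  apply: funext2 => h l; rewrite /actF /unitM (klinearZ _ _ (act_linear h)) act_one.
  by rewrite /unitM /unit2M !scalerA mulrC.
rewrite leftF_unit conv1A2; last exact: unit2M_bilinear.
by apply: funext2 => h l; rewrite /mulF /unitM /unit2M epsM scalerA.
Qed.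

Lemma Bvalued_actF v h l : Bvalued v -> coinv rho (actF act v h l).
Proof. by move=> cv; apply: act_Bvalued. Qed.

Lemma Bvalued_leftF v h l : Bvalued v -> coinv rho (leftF v h l).
Proof. by move=> cv; apply: coinvZ. Qed.

Lemma conv2_leftF_cancel f f' X : klinear f -> klinear f' -> kbilinear X ->
  convA f f' = unitA -> conv2A (leftF f) (conv2A (leftF f') X) = X.
Proof.
move=> hf hf' hX e; lrewrite -conv2AA.
by rewrite conv2_leftF // e leftF_unit conv1A2.
Qed.

Lemma conv2_rightF_cancel f f' X : klinear f -> klinear f' -> kbilinear X ->
  convA f f' = unitA -> conv2A (rightF f) (conv2A (rightF f') X) = X.
Proof.
move=> hf hf' hX e; lrewrite -conv2AA.
by rewrite conv2_rightF // e rightF_unit conv1A2.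
Qed.

Ltac conv2_assoc := repeat lrewrite conv2AA.

Lemma cocycle_conv w v : cocycle w -> cocycle v -> cocycle (convA w v).
Proof.
move=> [hw cw [w' [hw' cw' ww' w'w]] cocw] [hv cv [v' [hv' cv' vv' v'v]] cocv].
split; [mlin|exact: Bvalued_conv| |].
  exists (convA v' w'); split; [mlin|exact: Bvalued_conv| |].
    by lrewrite convAA; lrewrite -(@convAA v); rewrite vv' conv1A.
  by lrewrite convAA; lrewrite -(@convAA w'); rewrite w'w conv1A.
rewrite -conv2_mulF // cocw cocv -conv2_actF // -conv2_leftF //.
lrewrite (@conv2AA (actF act w)); lrewrite -(@conv2AA (leftF w)).
rewrite (@conv2AC (leftF w) (actF act v)); [|mlin|mlin|by move=> *; exact: Bvalued_leftF|
  by move=> *; exact: Bvalued_actF].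
by lrewrite (@conv2AA (actF act v)); lrewrite -(@conv2AA (actF act w)).
Qed.

(* Both sides of the cocycle identity reduce to (g (x) eps)(eps (x) c)(g' S (x) eps). *)
Lemma cocycle_conv_omega_antipode g g' : OmegaA Delta rho g -> OmegaA Delta rho g' ->
  cocycle (convA g (fun x => g' (S x))).
Proof.
move=> og og'; have hg := omega_linear og; have hg' := omega_linear og'.
set c := convA g (fun x => g' (S x)).
have hc : klinear c by rewrite /c; mlin.
have cc : Bvalued c.
  by apply: Bvalued_conv_col_acol; [|mlin|exact: omega_colinear|
    exact: omega_antipode_anticolinear].
split => //.
  exists (convA g' (fun x => g (S x))); split; [mlin| | |].
  - by apply: Bvalued_conv_col_acol; [|mlin|exact: omega_colinear|
      exact: omega_antipode_anticolinear].
  - lrewrite convAA; lrewrite -(@convAA (fun x => g' (S x))).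
    by rewrite (omega_antipode_conv og'); lrewrite conv1A; exact: omega_conv_antipode.
  - lrewrite convAA; lrewrite -(@convAA (fun x => g (S x))).
    by rewrite (omega_antipode_conv og); lrewrite conv1A; exact: omega_conv_antipode.
have -> : mulF c = conv2A (leftF g) (conv2A (rightF c) (leftF (fun x => g' (S x)))).
  lrewrite -conv2_mulF; rewrite (mulF_omega og) (mulF_omega_antipode og').
  by lrewrite conv2AA; lrewrite -(@conv2AA (rightF g)); lrewrite conv2_rightF.
rewrite (actF_omega og) //; lrewrite -conv2_leftF; conv2_assoc.
by lrewrite (conv2_leftF_cancel _ _ _ (omega_antipode_conv og)).
Qed.

Lemma omega_of_mulF c : klinear c -> colinearF c -> c 1 = 1 ->
  mulF c = conv2A (leftF c) (rightF c) -> OmegaA Delta rho c.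
Proof.
move=> hc cc c1 e; split => //; first exact/colinearP.
by move=> h g; rewrite -/(mulF c h g) e conv2_left_right.
Qed.

Lemma omega_conv_cocycle v f : cocycle v -> OmegaA Delta rho f ->
  OmegaA Delta rho (convA v f).
Proof.
move=> Zv og; have [hv cv _ cocv] := Zv; have hf := omega_linear og.
apply: omega_of_mulF; [mlin|apply: colinear_conv_B_col => //; exact: omega_colinear| |].
  rewrite /convM sw1; last by mlin.
  by rewrite cocycle1 // mul1r; case: og.
rewrite -conv2_mulF // cocv (mulF_omega og).
rewrite (@conv2AC (actF act v)); [|mlin|mlin|by move=> *; exact: Bvalued_actF|
  by move=> *; exact: Bvalued_leftF].
rewrite (actF_omega og) // -conv2_leftF // -conv2_rightF //; conv2_assoc.
by lrewrite (conv2_leftF_cancel _ _ _ (omega_antipode_conv og)).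
Qed.

(* The cocycle identity of w o S, read at (S l, S h). *)
Lemma mulF_antipode_cocycle w : klinear w -> cocycle (fun x => w (S x)) ->
  mulF w = conv2A (actSF act w) (rightF w).
Proof.
move=> hw [_ _ _ coc]; apply: funext2 => h l.
transitivity (mulF (fun x => w (S x)) (S l) (S h)); first by rewrite /mulF -antipodeM antipodeK.
rewrite coc conv2_actF_leftF; last by mlin.
rewrite sw_antipode; last by mlin.
rewrite /conv2M /actSF /rightF antipodeK.
rewrite (sw_ext (g := fun x y => act (S x) (w h) * w y)) => [|x y]; last by rewrite antipodeK.
rewrite -(sw_counitr (F := fun x => SW (fun a b => act (S a) (w x) * w b) l) h); last by mlin.
apply: sw_ext => x y; rewrite (sw_comp (L := fun z => eps y *: z)); [|mlin|mlin].
by apply: sw_ext => a b; rewrite scalerAr.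
Qed.

Lemma omega_conv_antipode_cocycle w g : klinear w -> Bvalued w ->
  cocycle (fun x => w (S x)) -> OmegaA Delta rho g -> OmegaA Delta rho (convA g w).
Proof.
move=> hw cw Zw og; have hg := omega_linear og.
apply: omega_of_mulF; [mlin|apply: colinear_conv_col_B => //; exact: omega_colinear| |].
  rewrite /convM sw1; last by mlin.
  have := cocycle1 Zw; rewrite antipode1 => ->.
  by rewrite mulr1; case: og.
rewrite -conv2_mulF // (mulF_antipode_cocycle hw Zw) (mulF_omega og) (actSF_omega og) //.
rewrite -conv2_leftF // -conv2_rightF //; conv2_assoc.
by lrewrite (conv2_rightF_cancel _ _ _ (omega_conv_antipode og)).
Qed.

(** * The subcategory X_A *)

Lemma conv_antipode f g : klinear f -> klinear g ->
  (fun h => convA f g (S h)) = convA (fun x => f (S x)) (fun x => g (S x)).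
Proof.
move=> hf hg; apply: functional_extensionality => h.
by rewrite /convM sw_antipode //; mlin.
Qed.

(* Cocommutativity makes every B-valued map a morphism 2 -> 2 of C_A. *)
Lemma Cmor22_Bvalued f : klinear f -> Bvalued f -> Cmor Delta S rho O2 O2 f.
Proof.
move=> hf cf; split => // h; rewrite (cf h); have htp := tp_mul_bilinear AH.
transitivity (SW (fun x y => SW (fun a b => tp_mul AH (f a) (S b * y)) x) h); last first.
  by apply: sw_ext => x y; rewrite sw_swap //; mlin.
rewrite (coassoc (f := fun a b y => tp_mul AH (f a) (S b * y))); last by mlin.
transitivity (SW (fun x y => eps y *: tp_mul AH (f x) 1) h).
  by rewrite (sw_counitr (F := fun x => tp_mul AH (f x) 1)) //; mlin.
apply: sw_ext => x y.
rewrite -(sw_comp (L := tp_mul AH (f x)) (f := fun a b => S a * b)); [|mlin|mlin].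
by rewrite (proj1 (antipode y)) (klinearZ _ _ (proj1 htp (f x))).
Qed.

Local Notation X := (Xmor Delta eps S rho t u).

Lemma Xmor22P f : X O2 O2 f <-> [/\ klinear f, Bvalued f & cocycle (fun x => f (S x))].
Proof. by split=> [[[hf cf] /cocycleP]|[hf cf /cocycleP]]. Qed.

Lemma Xmor12P f : X O1 O2 f <-> exists2 g, OmegaA Delta rho g & f = (fun x => g (S x)).
Proof.
split=> [[g [omg e]]|[g omg ->]]; last by exists g.
by exists g => //; exact: functional_extensionality.
Qed.

Lemma Xmor12_antipode c : klinear c -> OmegaA Delta rho (fun x => c (S x)) -> X O1 O2 c.
Proof.
move=> hc oc; apply/Xmor12P; exists (fun x => c (S x)) => //.
by apply: functional_extensionality => h; rewrite antipodeK.
Qed.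

Lemma Xmor_sub i j f : X i j f -> Cmor Delta S rho i j f.
Proof.
case: i; case: j => /=.
- by case=> [[hf cf] _].
- case/Xmor12P=> g omg ->; split; first by have hg := omega_linear omg; mlin.
  exact/anticolinearP/omega_antipode_anticolinear.
- by case=> hf /colinearP cf _ _; split => //; exact/colinearP.
- by case/Xmor22P=> hf cf _; exact: Cmor22_Bvalued.
Qed.

Lemma Xmor_id i : X i i (Cid A eps i).
Proof.
case: i; first exact/cocycleP/cocycle_unit.
apply/Xmor22P; split; [rewrite /Cid /cunit; mlin|exact: Bvalued_unit|].
have -> : (fun x => Cid A eps O2 (S x)) = unitA.
  by apply: functional_extensionality => h; rewrite /Cid /cunit /unitM eps_antipode.
exact: cocycle_unit.
Qed.

Lemma antipodeK_fun (f : H -> A) : (fun x => f (S (S x))) = f.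
Proof. by apply: functional_extensionality => h; rewrite antipodeK. Qed.

Lemma Xmor_comp i j l f g : X i j f -> X j l g -> X i l (Ccomp Delta f g).
Proof.
rewrite /Ccomp -/(convA g f).
case: i; case: j; case: l => /=.
- by move=> /cocycleP Zf /cocycleP Zg; apply/cocycleP; exact: cocycle_conv.
- move=> /cocycleP Zf /Xmor12P[g' omg' ->]; have [hf cf _ _] := Zf.
  have hg' := omega_linear omg'; apply: Xmor12_antipode; first by mlin.
  rewrite conv_antipode ?antipodeK_fun; [|mlin|mlin].
  by apply: omega_conv_antipode_cocycle; rewrite ?antipodeK_fun //; mlin.
- by move=> /Xmor12P[f' omf' ->] omg; apply/cocycleP; exact: cocycle_conv_omega_antipode.
- move=> /Xmor12P[f' omf' ->] /Xmor22P[hg cg Zg]; have hf' := omega_linear omf'.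
  apply: Xmor12_antipode; first by mlin.
  by rewrite conv_antipode ?antipodeK_fun; [exact: omega_conv_cocycle|mlin|mlin].
- by move=> omf /cocycleP Zg; exact: omega_conv_cocycle.
- move=> omf /Xmor12P[g' omg' ->]; have hf := omega_linear omf; have hg' := omega_linear omg'.
  apply/Xmor22P; split; first by mlin.
    apply: Bvalued_conv_acol_col => //; first by mlin.
      exact: omega_antipode_anticolinear.
    exact: omega_colinear.
  by rewrite conv_antipode ?antipodeK_fun; [exact: cocycle_conv_omega_antipode|mlin|mlin].
- by move=> /Xmor22P[hf cf Zf] omg; exact: omega_conv_antipode_cocycle.
- move=> /Xmor22P[hf cf Zf] /Xmor22P[hg cg Zg].
  apply/Xmor22P; split; [mlin|exact: Bvalued_conv|].
  by rewrite conv_antipode //; exact: cocycle_conv.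
Qed.

Lemma Xmor_subcategory : is_subcategory Delta eps S rho X.
Proof. by split; [exact: Xmor_sub|exact: Xmor_id|exact: Xmor_comp]. Qed.
End Hopf.

Theorem theorem5p6 (k : comPzRingType) (H A : algType k)
    (HH : tensor_product H H) (AH : tensor_product A H)
    (Delta : H -> HH) (eps : H -> k) (S : H -> H) (rho : A -> AH)
    (t u : H -> A) :
  is_cocomm_hopf Delta eps S ->
  is_comodule_algebra Delta eps rho ->
  (* B = A^{co H} is commutative *)
  (forall b1 b2, coinv rho b1 -> coinv rho b2 -> b1 * b2 = b2 * b1) ->
  (* A is cleft: t is convolution invertible, H-colinear, with inverse u *)
  klinear t -> colinear Delta rho t -> klinear u ->
  (forall h, conv Delta t u h = cunit A eps h) ->
  (forall h, conv Delta u t h = cunit A eps h) ->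
  is_subcategory Delta eps S rho (Xmor Delta eps S rho t u).
Proof.
move=> [hD [he [hS [coass [counit [DM [D1 [eM [e1 [antip cocomm]]]]]]]]]].
move=> [hrho _ _ rhoM rho1] B_comm ht hct hu tu ut.
exact: (Xmor_subcategory hD he hS coass counit DM D1 eM e1 antip cocomm hrho rhoM rho1
  ht hu hct (functional_extensionality _ _ tu) (functional_extensionality _ _ ut) B_comm).
Qed.
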